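(* Let $\mathbf{k}$ be a reproducing kernel with RKHS $\mathcal{H}_{\mathbf{k}}$, let $\mathcal{X}_{\mathrm{in}}$ be a finite input set and $\mathcal{X}_{\mathrm{out}}\subseteq\mathcal{X}_{\mathrm{in}}$ a random output, let $\mathcal{F}\subset\mathcal{H}_{\mathbf{k}}$, $\varepsilon\ge0$, and $\delta'\in(0,1)$. Let $a:=\sup_{f\in\mathcal{F}}\|f\|_{\mathbf{k}}$, $\mathbb{B}_{\mathcal{F}}:=\{f\in\mathcal{H}_{\mathbf{k}}:\|f\|_{\mathbf{k}}\le a\}$, and let $\mathcal{C}_{\varepsilon,\mathcal{F}}$ be a set of minimum cardinality satisfying $\mathcal{C}_{\varepsilon,\mathcal{F}}\subset\mathbb{B}_{\mathcal{F}}$ and $\sup_{f\in\mathcal{F}}\min_{f'\in\mathcal{C}_{\varepsilon,\mathcal{F}}}\max_{x\in\mathcal{X}_{\mathrm{in}}}|f(x)-f'(x)|\le\varepsilon$. If $(\mathbb{P}_{\mathrm{in}}-\mathbb{P}_{\mathrm{out}})\mathbf{k}$ is $(\mathbf{k},\nu)$-sub-Gaussian on an event $\mathcal{E}$, then $$\mathbb{P}\Big(\mathcal{E}\cap\Big\{\sup_{f\in\mathcal{F}}(\mathbb{P}_{\mathrm{in}}-\mathbb{P}_{\mathrm{out}})f>2\varepsilon+\nu a\sqrt{2\log(|\mathcal{C}_{\varepsilon,\mathcal{F}}|/\delta')}\Big\}\Big)\le\delta',$$ i.e. on $\mathcal{E}$, $\sup_{f\in\mathcal{F}}(\mathbb{P}_{\mathrm{in}}-\mathbb{P}_{\mathrm{out}})f\le2\varepsilon+\nu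 a\sqrt{2\log(|\mathcal{C}_{\varepsilon,\mathcal{F}}|/\delta')}$ with probability at least $1-\delta'$.
   Context: $\mathbb{P}_{\mathrm{in}},\mathbb{P}_{\mathrm{out}}$ are the empirical distributions of $\mathcal{X}_{\mathrm{in}},\mathcal{X}_{\mathrm{out}}$; $(\mathbb{P}_{\mathrm{in}}-\mathbb{P}_{\mathrm{out}})f:=\mathbb{E}_{\mathbb{P}_{\mathrm{in}}}f-\mathbb{E}_{\mathbb{P}_{\mathrm{out}}}f$ and $(\mathbb{P}_{\mathrm{in}}-\mathbb{P}_{\mathrm{out}})\mathbf{k}:=\frac{1}{|\mathcal{X}_{\mathrm{in}}|}\sum_{x\in\mathcal{X}_{\mathrm{in}}}\mathbf{k}(x,\cdot)-\frac1{|\mathcal{X}_{\mathrm{out}}|}\sum_{x\in\mathcal{X}_{\mathrm{out}}}\mathbf{k}(x,\cdot)$. A random $\phi\in\mathcal{H}_{\mathbf{k}}$ is $(\mathbf{k},\nu)$-sub-Gaussian on $\mathcal{E}$ if $\nu>0$ and $\mathbb{E}[\exp(\langle f,\phi\rangle_{\mathbf{k}})\mathbf{1}_{\mathcal{E}}]\le\exp(\frac{\nu^2}{2}\|f\|_{\mathbf{k}}^2)$ for all $f\in\mathcal{H}_{\mathbf{k}}$. *)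

From HB Require Import structures.
From mathcomp Require Import all_boot all_order all_algebra finmap.
From mathcomp Require Import all_classical all_reals all_analysis.
Set Implicit Arguments. Unset Strict Implicit. Unset Printing Implicit Defensive.
Import Order.TTheory GRing.Theory Num.Theory.
Local Open Scope classical_set_scope.
Local Open Scope fset_scope.
Local Open Scope ring_scope.

Record RKHS (R : realType) (X : Type) := {
  Hspace : set (X -> R);
  ip : (X -> R) -> (X -> R) -> R;
  kern : X -> X -> R;
  Hspace0 : Hspace (fun=> 0);
  HspaceD : forall f g, Hspace f -> Hspace g -> Hspace (fun x => f x + g x);
  HspaceZ : forall (a : R) f, Hspace f -> Hspace (fun x => a * f x);
  ip_sym : forall f g, Hspace f -> Hspace g -> ip f g = ip g f;
  ip_linear : forall (a : R) f g h, Hspace f -> Hspace g -> Hspace h ->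
    ip (fun x => a * f x + g x) h = a * ip f h + ip g h;
  ip_ge0 : forall f, Hspace f -> 0 <= ip f f;
  ip_eq0 : forall f, Hspace f -> ip f f = 0 -> f = (fun=> 0);
  Hcomplete : forall u : nat -> (X -> R), (forall n, Hspace (u n)) ->
    (forall e : R, 0 < e -> exists N : nat, forall m n : nat, (N <= m)%N -> (N <= n)%N ->
        Num.sqrt (ip (fun x => u m x - u n x) (fun x => u m x - u n x)) < e) ->
    exists2 g, Hspace g & forall e : R, 0 < e -> exists N : nat, forall n : nat, (N <= n)%N ->
        Num.sqrt (ip (fun x => u n x - g x) (fun x => u n x - g x)) < e;
  kern_in : forall x, Hspace (kern x);
  reproducing : forall f x, Hspace f -> ip f (kern x) = f x
}.

Definition Hnorm (R : realType) (X : Type) (K : RKHS R X) (f : X -> R) : R :=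
  Num.sqrt (ip K f f).

Definition emp (R : realType) (X : choiceType) (S : {fset X}) (f : X -> R) : R :=
  (#|` S|%:R)^-1 * \sum_(x <- S) f x.

Definition emp_diff (R : realType) (X : choiceType) (Sin Sout : {fset X}) (f : X -> R) : R :=
  emp Sin f - emp Sout f.

Definition emp_diff_kernel (R : realType) (X : choiceType) (K : RKHS R X)
    (Sin Sout : {fset X}) : X -> R :=
  fun y => emp Sin (fun x => kern K x y) - emp Sout (fun x => kern K x y).

Definition subgaussian_on (R : realType) (X : Type) (K : RKHS R X)
    (d : measure_display) (T : measurableType d) (P : probability T R)
    (phi : T -> (X -> R)) (nu : R) (E : set T) : Prop :=
  0 < nu /\
  forall f, Hspace K f ->
    (\int[P]_(w in E) (expR (ip K f (phi w)))%:E
      <= (expR (nu ^+ 2 / 2 * Hnorm K f ^+ 2))%:E)%E.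

Definition sup_norm (R : realType) (X : Type) (K : RKHS R X) (F : set (X -> R)) : \bar R :=
  ereal_sup [set (Hnorm K f)%:E | f in F].

Definition is_cover (R : realType) (X : choiceType) (K : RKHS R X) (Xin : {fset X})
    (F : set (X -> R)) (eps : R) (C : {fset (X -> R)}) : Prop :=
  (forall c, c \in C -> Hspace K c /\ ((Hnorm K c)%:E <= sup_norm K F)%E) /\
  (forall f, F f -> exists2 c, c \in C & forall x, x \in Xin -> `|f x - c x| <= eps).

Definition is_min_cover (R : realType) (X : choiceType) (K : RKHS R X) (Xin : {fset X})
    (F : set (X -> R)) (eps : R) (C : {fset (X -> R)}) : Prop :=
  is_cover K Xin F eps C /\
  forall C' : {fset (X -> R)}, is_cover K Xin F eps C' -> (#|` C| <= #|` C'|)%N.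

(* For a fixed c in the RKHS with norm at most a, the reproducing property gives
   (P_in - P_out) c = <c, (P_in - P_out) k>, so the sub-Gaussian hypothesis and
   Chernoff's bound give P(E and (P_in - P_out) c > nu a t) <= exp(-t^2/2).
   If some f in F exceeds 2 eps + nu a t, its eps-close cover element exceeds
   nu a t, since each of the two empirical means moves by at most eps.  A union
   bound over the cover with t = sqrt(2 log(|C| / delta)) gives |C| exp(-t^2/2) = delta. *)

From HB Require Import structures.
From mathcomp Require Import all_boot all_order all_algebra finmap.
From mathcomp Require Import all_classical all_reals all_analysis.
From mathcomp Require Import measurable_realfun lra.
Set Implicit Arguments. Unset Strict Implicit. Unset Printing Implicit Defensive.
Import Order.TTheory GRing.Theory Num.Theory.
Local Open Scope classical_set_scope.
Local Open Scope ring_scope.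

Section RKHSAlgebra.
Variables (R : realType) (X : Type) (K : RKHS R X).

Lemma ip0l h : Hspace K h -> ip K (fun=> 0) h = 0.
Proof.
move=> Hh; have := ip_linear 1 (Hspace0 K) (Hspace0 K) Hh.
rewrite (_ : (fun _ => 1 * 0 + 0) = fun=> 0); last first.
  by apply: funext => x; rewrite mulr0 addr0.
by rewrite mul1r => e; lra.
Qed.

Lemma ipZl a f h : Hspace K f -> Hspace K h ->
  ip K (fun x => a * f x) h = a * ip K f h.
Proof.
move=> Hf Hh; have := ip_linear a Hf (Hspace0 K) Hh.
rewrite ip0l // addr0 => <-; congr ip.
by apply: funext => x; rewrite addr0.
Qed.

Lemma ipBl f g h : Hspace K f -> Hspace K g -> Hspace K h ->
  ip K (fun x => f x - g x) h = ip K f h - ip K g h.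
Proof.
move=> Hf Hg Hh; have := ip_linear (-1) Hg Hf Hh.
rewrite mulN1r addrC => <-; congr ip.
by apply: funext => x; rewrite mulN1r addrC.
Qed.

Lemma HspaceB f g : Hspace K f -> Hspace K g -> Hspace K (fun x => f x - g x).
Proof.
move=> Hf Hg; have := HspaceD (HspaceZ (-1) Hg) Hf.
congr Hspace; apply: funext => x; by rewrite mulN1r addrC.
Qed.

Lemma Hnorm_eq0 f : Hspace K f -> Hnorm K f = 0 -> f = fun=> 0.
Proof.
move=> Hf /eqP; rewrite sqrtr_eq0 => ip_le0.
by apply: (ip_eq0 Hf); apply: le_anti; rewrite ip_le0 ip_ge0.
Qed.

Lemma HnormZ a f : Hspace K f -> Hnorm K (fun x => a * f x) = `|a| * Hnorm K f.
Proof.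
move=> Hf; have Haf := HspaceZ a Hf.
rewrite /Hnorm ipZl // (ip_sym Hf Haf) ipZl // mulrA -expr2.
by rewrite sqrtrM ?sqr_ge0 // sqrtr_sqr.
Qed.

Lemma Hspace_sum_kern (s : seq X) : Hspace K (fun y => \sum_(x <- s) kern K x y).
Proof.
elim: s => [|x s IHs].
  by under eq_fun do rewrite big_nil; exact: Hspace0.
under eq_fun do rewrite big_cons; exact: HspaceD (kern_in K x) IHs.
Qed.

Lemma ip_sum_kern c (s : seq X) : Hspace K c ->
  ip K (fun y => \sum_(x <- s) kern K x y) c = \sum_(x <- s) c x.
Proof.
move=> Hc; elim: s => [|x s IHs].
  by under eq_fun do rewrite big_nil; rewrite ip0l // big_nil.
have := ip_linear 1 (kern_in K x) (Hspace_sum_kern s) Hc.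
rewrite mul1r (ip_sym (kern_in K x) Hc) reproducing // big_cons -IHs => <-.
by congr ip; apply: funext => y; rewrite big_cons mul1r.
Qed.

End RKHSAlgebra.

Section EmpiricalMeans.
Variables (R : realType) (X : choiceType).
Implicit Types (S Sin : {fset X}) (f g : X -> R).

Lemma empB S f g : emp S (fun x => f x - g x) = emp S f - emp S g.
Proof. by rewrite /emp sumrB mulrBr. Qed.

Lemma emp_le S f (b : R) : 0 <= b -> {in S, forall x, f x <= b} -> emp S f <= b.
Proof.
move=> b_ge0 f_le; rewrite /emp.
have [->|S_gt0] := posnP #|` S|; first by rewrite invr0 mul0r.
rewrite ler_pdivrMl ?ltr0n // big_seq (le_trans (ler_sum _ f_le)) //.
by rewrite -big_seq big_const_seq count_predT iter_addr_0 mulr_natl.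
Qed.

Lemma emp_diff_close Sin S f g (eps : R) :
  (S `<=` Sin)%fset -> 0 <= eps -> {in Sin, forall x, `|f x - g x| <= eps} ->
  emp_diff Sin S f <= emp_diff Sin S g + 2 * eps.
Proof.
move=> SSin eps_ge0 fg.
have close_in : emp Sin f - emp Sin g <= eps.
  by rewrite -empB; apply: emp_le => // x /fg; apply: le_trans (ler_norm _).
have close_out : emp S g - emp S f <= eps.
  rewrite -empB; apply: emp_le => // x /(fsubsetP SSin)/fg.
  by rewrite distrC; apply: le_trans (ler_norm _).
rewrite /emp_diff; lra.
Qed.

End EmpiricalMeans.

Section KernelMeanEmbedding.
Variables (R : realType) (X : choiceType) (K : RKHS R X).
Implicit Types (S Sin : {fset X}) (c : X -> R).

Lemma Hspace_emp_kern S : Hspace K (fun y => emp S (fun x => kern K x y)).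
Proof. by apply: HspaceZ; exact: Hspace_sum_kern. Qed.

Lemma ip_emp_kern S c :
  Hspace K c -> ip K (fun y => emp S (fun x => kern K x y)) c = emp S c.
Proof.
move=> Hc; rewrite /emp (ipZl _ (f := fun y => \sum_(x <- S) kern K x y)) //.
  by rewrite ip_sum_kern.
exact: Hspace_sum_kern.
Qed.

Lemma Hspace_emp_diff_kernel Sin S : Hspace K (emp_diff_kernel K Sin S).
Proof. by apply: HspaceB; exact: Hspace_emp_kern. Qed.

Lemma ip_emp_diff_kernel Sin S c :
  Hspace K c -> ip K c (emp_diff_kernel K Sin S) = emp_diff Sin S c.
Proof.
move=> Hc; rewrite ip_sym //; last exact: Hspace_emp_diff_kernel.
by rewrite ipBl ?ip_emp_kern //; exact: Hspace_emp_kern.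
Qed.

End KernelMeanEmbedding.

Section FiniteRangeMeasurability.
Variables (d : measure_display) (T : measurableType d) (X : choiceType).
Variables (Xin : {fset X}) (Xout : T -> {fset X}).
Hypothesis Xout_sub : forall w, (Xout w `<=` Xin)%fset.
Hypothesis Xout_meas : forall S : {fset X}, measurable [set w | Xout w = S].

Lemma measurable_Xout_pred (Q : {fset X} -> Prop) : measurable [set w | Q (Xout w)].
Proof.
rewrite (_ : [set w | Q (Xout w)] = \bigcup_(S in [set S | S \in fpowerset Xin /\ Q S])
    [set w | Xout w = S]).
  apply: fin_bigcup_measurable => //.
  by apply: sub_finite_set (finite_fset (fpowerset Xin)) => S [].
apply/seteqP; split => [w QXw | w [S [_ QS] /= ->] //].
by exists (Xout w) => //=; rewrite fpowersetE Xout_sub.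
Qed.

Lemma measurable_fun_Xout (d' : measure_display) (U : measurableType d')
    (h : {fset X} -> U) (D : set T) :
  measurable D -> measurable_fun D (fun w => h (Xout w)).
Proof.
move=> mD _ Y mY; apply: measurableI => //.
exact: (measurable_Xout_pred (fun S => Y (h S))).
Qed.

End FiniteRangeMeasurability.

Section PreimageOfRays.
Variables (d : measure_display) (T : measurableType d) (R : realType).
Variables (D : set T) (g : T -> R) (s : R).
Hypotheses (mD : measurable D) (mg : measurable_fun D g).

Lemma measurable_setI_le : measurable (D `&` [set w | s <= g w]).
Proof.
have := mg mD (measurable_itv `[s, +oo[); congr measurable.
by apply/seteqP; split => w [Dw]; rewrite /= ?in_itv /= andbT.
Qed.

Lemma measurable_setI_lt : measurable (D `&` [set w | s < g w]).
Proof.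
have := mg mD (measurable_itv `]s, +oo[); congr measurable.
by apply/seteqP; split => w [Dw]; rewrite /= ?in_itv /= andbT.
Qed.

End PreimageOfRays.

Section SubGaussianTail.
Variables (R : realType) (X : Type) (K : RKHS R X).
Variables (d : measure_display) (T : measurableType d) (P : probability T R).
Variables (phi : T -> X -> R) (nu : R) (E : set T).
Hypothesis mE : measurable E.
Hypothesis phi_subgaussian : subgaussian_on K P phi nu E.

Lemma subgaussian_chernoff c s : Hspace K c ->
  measurable_fun E (fun w => ip K c (phi w)) ->
  ((expR s)%:E * P (E `&` [set w | (s <= ip K c (phi w))%R])
    <= (expR (nu ^+ 2 / 2 * Hnorm K c ^+ 2))%:E)%E.
Proof.
move=> Hc mg; set A := E `&` _.
have mA : measurable A := measurable_setI_le s mE mg.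
have mexp : measurable_fun E (fun w => (expR (ip K c (phi w)))%:E).
  by apply/measurable_EFinP; apply: measurableT_comp mg; exact: measurable_expR.
rewrite -integral_cst //; apply: le_trans (phi_subgaussian.2 c Hc).
apply: (@le_trans _ _ (\int[P]_(w in A) (expR (ip K c (phi w)))%:E)%E).
  apply: ge0_le_integral => //.
  - by move=> w _; rewrite lee_fin expR_ge0.
  - exact: measurable_funS mE (@subIsetl _ _ _) mexp.
  - by move=> w [_ s_le]; rewrite lee_fin ler_expR.
by apply: ge0_subset_integral => //; exact: subIsetl.
Qed.

Lemma subgaussian_tail c r t : (forall w, Hspace K (phi w)) -> Hspace K c ->
  Hnorm K c <= r -> 0 <= t -> measurable_fun E (fun w => ip K c (phi w)) ->
  (P (E `&` [set w | (nu * t * r < ip K c (phi w))%R]) <= (expR (- (t ^+ 2 / 2)))%:E)%E.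
Proof.
move=> Hphi Hc c_le_r t_ge0 mg; have [nu_gt0 _] := phi_subgaussian.
have c_ge0 : 0 <= Hnorm K c := sqrtr_ge0 _.
have [r_gt0 | r_le0] := ltP 0 r; last first.
  have r0 : r = 0 by apply/eqP; rewrite eq_le r_le0 (le_trans c_ge0 c_le_r).
  have c0 : c = fun=> 0.
    by apply: (Hnorm_eq0 Hc); apply: le_anti; rewrite c_ge0 -r0 c_le_r.
  rewrite (_ : _ `&` _ = set0) ?measure0 ?lee_fin ?expR_ge0 //.
  by apply/seteqP; split => w // [_] /=; rewrite r0 mulr0 c0 ip0l // ltxx.
(* Chernoff at the parameter [t / (nu r)] moves the threshold [nu t r] to [t ^+ 2]. *)
have [lam lam_ge0 lam_nu_r] : exists2 lam, 0 <= lam & lam * (nu * r) = t.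
  exists (t / (nu * r)); first by rewrite divr_ge0 // ltW // mulr_gt0.
  by rewrite divfK // gt_eqF // mulr_gt0.
have Hlc := HspaceZ lam Hc.
have mlg : measurable_fun E (fun w => ip K (fun x => lam * c x) (phi w)).
  rewrite (_ : (fun w => _) = fun w => lam * ip K c (phi w)).
    exact: measurable_funM.
  by apply: funext => w; rewrite ipZl.
have tail_sub : E `&` [set w | nu * t * r < ip K c (phi w)]
    `<=` E `&` [set w | t ^+ 2 <= ip K (fun x => lam * c x) (phi w)].
  move=> w [Ew /ltW lt_ip]; split => //=.
  rewrite ipZl // (_ : t ^+ 2 = lam * (nu * t * r)); first exact: ler_wpM2l.
  by rewrite expr2 -{1}lam_nu_r -mulrA mulrAC.
have norm_bound : nu ^+ 2 / 2 * Hnorm K (fun x => lam * c x) ^+ 2 <= t ^+ 2 / 2.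
  rewrite HnormZ // ger0_norm // -lam_nu_r.
  have : lam * nu * Hnorm K c <= lam * nu * r.
    by apply: ler_wpM2l => //; rewrite mulr_ge0 // ltW.
  have : 0 <= lam * nu * Hnorm K c by rewrite !mulr_ge0 // ltW.
  nra.
rewrite (_ : expR _ = (expR (t ^+ 2))^-1 * expR (t ^+ 2 / 2)); last first.
  by rewrite [RHS]mulrC -expRB; congr expR; lra.
apply: le_trans (le_measure _ _ _ tail_sub) _; rewrite ?inE.
- exact: measurable_setI_lt.
- exact: measurable_setI_le.
rewrite EFinM lee_pdivlMl ?expR_gt0 //.
apply: le_trans (subgaussian_chernoff _ Hlc mlg) _.
by rewrite lee_fin ler_expR.
Qed.

End SubGaussianTail.

Lemma expR_Nhalf_sqr_sqrt_ln (R : realType) (y : R) :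
  1 <= y -> expR (- (Num.sqrt (2 * ln y) ^+ 2 / 2)) = y^-1.
Proof.
move=> y_ge1; rewrite sqr_sqrtr ?mulr_ge0 ?ln_ge0 //.
rewrite (_ : 2 * ln y / 2 = ln y); last lra.
by rewrite expRN lnK // posrE (lt_le_trans ltr01).
Qed.

Section CoverUnionBound.
Variables (R : realType) (X : choiceType) (K : RKHS R X).
Variables (d : measure_display) (T : measurableType d) (P : probability T R).
Variables (Xin : {fset X}) (Xout : T -> {fset X}).
Hypothesis Xout_sub : forall w, (Xout w `<=` Xin)%fset.
Hypothesis Xout_meas : forall S : {fset X}, measurable [set w | Xout w = S].
Variables (nu : R) (E : set T).
Hypothesis mE : measurable E.
Hypothesis subgaussian_emp_diff :
  subgaussian_on K P (fun w => emp_diff_kernel K Xin (Xout w)) nu E.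

Lemma emp_diff_sup_tail (F : set (X -> R)) (C : {fset (X -> R)}) (eps r t : R) :
  0 <= eps -> 0 <= t -> (forall c, c \in C -> Hspace K c /\ Hnorm K c <= r) ->
  (forall f, F f -> exists2 c, c \in C & {in Xin, forall x, `|f x - c x| <= eps}) ->
  (P (E `&` [set w | ((2 * eps + nu * t * r)%:E
                      < ereal_sup [set (emp_diff Xin (Xout w) f)%:E | f in F])%E])
    <= (#|` C|%:R * expR (- (t ^+ 2 / 2)))%:E)%E.
Proof.
move=> eps_ge0 t_ge0 C_ball C_cover.
set A := fun c => E `&` [set w | nu * t * r < ip K c (emp_diff_kernel K Xin (Xout w))].
have mA c : measurable (A c).
  exact: measurableI mE (measurable_Xout_pred Xout_sub Xout_meas
    (fun S => nu * t * r < ip K c (emp_diff_kernel K Xin S))).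
apply: le_trans (content_sub_fsum P (D := [set` C]) (A_ := A) _ _ _ _) _ => //.
- apply: measurableI mE (measurable_Xout_pred Xout_sub Xout_meas (fun S =>
    ((2 * eps + nu * t * r)%:E < ereal_sup [set (emp_diff Xin S f)%:E | f in F])%E)).
- move=> w [Ew /ereal_sup_gt [_ [f Ff <-]]]; rewrite lte_fin => f_large.
  have [c cC fc] := C_cover f Ff; have [Hc _] := C_ball c cC.
  exists c => //; split => //=; rewrite ip_emp_diff_kernel //.
  have := emp_diff_close (Xout_sub w) eps_ge0 fc; lra.
rewrite -fsbig_seq ?fset_uniq // big_seq.
rewrite (_ : (_ * _)%:E = \sum_(c <- C | c \in C) (expR (- (t ^+ 2 / 2)))%:E).
  apply: lee_sum => c cC; have [Hc c_le_r] := C_ball c cC.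
  apply: subgaussian_tail => // [w|]; first exact: Hspace_emp_diff_kernel.
  exact: (measurable_fun_Xout Xout_sub Xout_meas
    (fun S => ip K c (emp_diff_kernel K Xin S))).
by rewrite -big_seq sumEFin big_const_seq count_predT iter_addr_0 mulr_natl.
Qed.

End CoverUnionBound.

Theorem lemmaC3 (R : realType) (X : choiceType) (K : RKHS R X)
  (d : measure_display) (T : measurableType d) (P : probability T R)
  (Xin : {fset X}) (Xout : T -> {fset X})
  (Xout_sub : forall w, (Xout w `<=` Xin)%fset)
  (Xout_ne : forall w, Xout w != fset0)
  (Xout_meas : forall S : {fset X}, measurable [set w | Xout w = S])
  (F : set (X -> R)) (HF : (F `<=` Hspace K)%classic)
  (eps : R) (Heps : 0 <= eps) (delta : R) (Hdelta : 0 < delta < 1)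
  (C : {fset (X -> R)}) (HC : is_min_cover K Xin F eps C)
  (nu : R) (E : set T) (mE : measurable E)
  (Hsg : subgaussian_on K P (fun w => emp_diff_kernel K Xin (Xout w)) nu E) :
  (P (E `&` [set w | ((2 * eps)%:E
          + (nu * Num.sqrt (2 * ln (#|` C|%fset%:R / delta)))%:E * sup_norm K F
        < ereal_sup [set (emp_diff Xin (Xout w) f)%:E | f in F])%E])
    <= delta%:E)%E.
Proof.
have [nu_gt0 _] := Hsg; case/andP: Hdelta => delta_gt0 delta_lt1.
have [[C_ball C_cover] _] := HC.
have [[f0 Ff0] | noF] := pselect (exists f, F f); last first.
  rewrite (_ : _ `&` _ = set0) ?measure0 ?lee_fin ?ltW //.
  apply/seteqP; split => w // [_] /=.
  rewrite (_ : [set _ | f in F] = set0) ?ereal_sup0 ?ltNge ?leNye //.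
  by apply/seteqP; split => y // [f Ff]; exfalso; apply: noF; exists f.
have C_ge1 : 1 <= #|` C|%:R :> R.
  have [c0 c0C _] := C_cover f0 Ff0.
  by rewrite ler1n cardfs_gt0; apply/fset0Pn; exists c0.
have level_ge1 : 1 <= #|` C|%:R / delta.
  by rewrite ler_pdivlMr // mul1r (le_trans (ltW delta_lt1)).
set t := Num.sqrt _.
have t_gt0 : 0 < t.
  by rewrite sqrtr_gt0 mulr_gt0 // ln_gt0 // ltr_pdivlMr // mul1r (lt_le_trans delta_lt1).
have : ((Hnorm K f0)%:E <= sup_norm K F)%E by apply: ereal_sup_ubound; exists f0.
case: (sup_norm K F) (C_ball) => [r | | ] C_r f0_le; last first.
- by move: f0_le; rewrite leeNy_eq.
- rewrite (_ : _ `&` _ = set0) ?measure0 ?lee_fin ?ltW //.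
  apply/seteqP; split => w // [_] /=.
  by rewrite gt0_muley ?lte_fin ?mulr_gt0 // addey // ltNge leey.
rewrite -EFinM -EFinD.
apply: le_trans (emp_diff_sup_tail Xout_sub Xout_meas mE Hsg Heps (ltW t_gt0) _ C_cover) _.
  by move=> c /C_r [Hc]; rewrite lee_fin.
rewrite lee_fin expR_Nhalf_sqr_sqrt_ln // invf_div mulrCA divff ?mulr1 //.
by rewrite gt_eqF // (lt_le_trans ltr01 C_ge1).
Qed.
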